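(* Let $G$ be a simple undirected graph on $\{1,\dots,n\}$ ($n\ge2$) with adjacency $g_{ij}$ ($g_{ii}=0$) and $m$ edges. Suppose the potential outcomes are $Y_i(\mathbf z)=\alpha_i+\beta_iz_i+\gamma\sum_jg_{ij}z_j$ for constants $\alpha_i,\beta_i,\gamma$. Under a completely randomized design with $n_t$ treated units, $1\le n_t\le n-1$, the estimator $$\hat\beta_{naive}=\frac{\sum_i Y_i^{obs}Z_i}{\sum_i Z_i}-\frac{\sum_i Y_i^{obs}(1-Z_i)}{\sum_i(1-Z_i)}$$ satisfies $\mathbb E[\hat\beta_{naive}]-\mathrm{DTE}=-\gamma\frac{2m}{n(n-1)}$, where $\mathrm{DTE}=\frac1n\sum_i\beta_i$ is the direct treatment effect (the average of $Y_i$ with unit $i$ treated and no neighbor treated minus $Y_i$ with no unit treated).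
   Context: Completely randomized design: $\mathbf Z$ is uniform over vectors in $\{0,1\}^n$ with exactly $n_t$ ones. $Y_i^{obs}=Y_i(\mathbf Z)$. *)

From HB Require Import structures.
From mathcomp Require Import all_boot all_order all_algebra.
Set Implicit Arguments. Unset Strict Implicit. Unset Printing Implicit Defensive.
Import Order.TTheory GRing.Theory Num.Theory.
Local Open Scope ring_scope.

(* Treatment assignments: z : {ffun 'I_n -> bool}, z i = true iff unit i treated. *)

Definition simple_graph (n : nat) (g : 'I_n -> 'I_n -> bool) : Prop :=
  (forall i, g i i = false) /\ (forall i j, g i j = g j i).

Definition num_edges (n : nat) (g : 'I_n -> 'I_n -> bool) : nat :=
  #|[set p : 'I_n * 'I_n | (p.1 < p.2)%N && g p.1 p.2]|.

Definition crd_support (n nt : nat) : {set {ffun 'I_n -> bool}} :=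
  [set z : {ffun 'I_n -> bool} | #|[set i | z i]| == nt].

Definition crd_expect (R : fieldType) (n nt : nat)
    (X : {ffun 'I_n -> bool} -> R) : R :=
  (\sum_(z in crd_support n nt) X z) / #|crd_support n nt|%:R.

Definition Yobs (R : Type) (n : nat) (Y : 'I_n -> {ffun 'I_n -> bool} -> R)
    (z : {ffun 'I_n -> bool}) (i : 'I_n) : R := Y i z.

Definition beta_naive (R : fieldType) (n : nat)
    (Y : 'I_n -> {ffun 'I_n -> bool} -> R) (z : {ffun 'I_n -> bool}) : R :=
  (\sum_i Yobs Y z i * (z i)%:R) / (\sum_i (z i)%:R)
  - (\sum_i Yobs Y z i * (1 - (z i)%:R)) / (\sum_i (1 - (z i)%:R)).

Definition only_treated (n : nat) (i : 'I_n) : {ffun 'I_n -> bool} :=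
  [ffun j => j == i].
Definition none_treated (n : nat) : {ffun 'I_n -> bool} := [ffun _ => false].

Definition DTE (R : fieldType) (n : nat)
    (Y : 'I_n -> {ffun 'I_n -> bool} -> R) : R :=
  (\sum_i (Y i (only_treated i) - Y i (none_treated n))) / n%:R.

From mathcomp Require Import all_boot all_order all_algebra all_fingroup.
From mathcomp Require Import ring zify.
Set Implicit Arguments. Unset Strict Implicit. Unset Printing Implicit Defensive.
Import Order.TTheory GRing.Theory Num.Theory.
Local Open Scope ring_scope.

(* Under a completely randomized design the treatment indicators are exchangeable, so
   E[z_i] = nt/n and E[z_i z_j] = nt(nt-1)/(n(n-1)) for i <> j.  On the support the naive
   estimator is a linear combination of outcomes, so its mean only involves these two moments.
   A treated unit sees each neighbour treated with probability (nt-1)/(n-1), a control unit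
   with probability nt/(n-1); the gap 1/(n-1), summed over the 2m ordered adjacent pairs and
   averaged over n units, is the bias -gamma 2m/(n(n-1)). *)

Lemma exists_perm2 (T : finType) (i j k l : T) : i != j -> k != l ->
  exists s : {perm T}, s k = i /\ s l = j.
Proof.
move=> ij kl; set l' := tperm k i l.
have l'i : l' != i by rewrite -[i](tpermL k i) (inj_eq perm_inj) eq_sym.
exists (tperm k i * tperm l' j)%g; rewrite !permM tpermL; split; last exact: tpermL.
by rewrite tpermD // eq_sym.
Qed.

Lemma sum_nat_bool (T : finType) (P : pred T) : (\sum_x P x)%N = #|P|.
Proof.
by rewrite -sum1_card [RHS]big_mkcond; apply: eq_bigr => x _; rewrite unfold_in; case: (P x).
Qed.

Lemma sum_treated (R : pzSemiRingType) n (z : {ffun 'I_n -> bool}) :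
  \sum_i ((z i)%:R : R) = #|[set i | z i]|%:R.
Proof. by rewrite -natr_sum sum_nat_bool cardsE. Qed.

Lemma crd_support_card_gt0 n nt : (nt <= n)%N -> (0 < #|crd_support n nt|)%N.
Proof.
move=> nt_le_n; apply/card_gt0P; exists [ffun i : 'I_n => (i < nt)%N]; rewrite inE.
have -> : [set i | [ffun i : 'I_n => (i < nt)%N] i] = widen_ord nt_le_n @: [set: 'I_nt].
  apply/setP => i; rewrite inE ffunE; apply/idP/imsetP => [lt_i_nt|[j _ ->]].
    by exists (Ordinal lt_i_nt); last apply: val_inj.
  by rewrite /= ltn_ord.
have widen_inj : injective (widen_ord nt_le_n) by move=> j k [] /val_inj.
by rewrite card_imset // cardsT card_ord.
Qed.

Section Expectation.
Variables (R : fieldType) (n nt : nat).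
Local Notation S := (crd_support n nt).
Local Notation E := (@crd_expect R n nt).
Implicit Types (F G : {ffun 'I_n -> bool} -> R).

Lemma eq_crd_expect F G : {in S, F =1 G} -> E F = E G.
Proof. by move=> eFG; rewrite /crd_expect (eq_bigr _ eFG). Qed.

Lemma crd_expectD F G : E (fun z => F z + G z) = E F + E G.
Proof. by rewrite /crd_expect big_split mulrDl. Qed.

Lemma crd_expectB F G : E (fun z => F z - G z) = E F - E G.
Proof. by rewrite /crd_expect sumrB mulrBl. Qed.

Lemma crd_expectZ c F : E (fun z => c * F z) = c * E F.
Proof. by rewrite /crd_expect -mulr_sumr mulrA. Qed.

Lemma crd_expectMr c F : E (fun z => F z * c) = E F * c.
Proof. by rewrite /crd_expect -mulr_suml mulrAC. Qed.

Lemma crd_expect_sum (I : Type) (r : seq I) (P : pred I) (F : I -> _ -> R) :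
  E (fun z => \sum_(i <- r | P i) F i z) = \sum_(i <- r | P i) E (F i).
Proof. by rewrite /crd_expect exchange_big mulr_suml. Qed.

Lemma crd_expect_perm (s : {perm 'I_n}) F :
  E F = E (fun z => F [ffun i => z (s i)]).
Proof.
pose h (z : {ffun 'I_n -> bool}) : {ffun 'I_n -> bool} := [ffun i => z (s i)].
pose h' (z : {ffun 'I_n -> bool}) : {ffun 'I_n -> bool} := [ffun i => z ((s^-1)%g i)].
have hK : cancel h h' by move=> z; apply/ffunP => i; rewrite !ffunE permKV.
rewrite /crd_expect (reindex_inj (can_inj hK)); congr (_ / _).
apply: eq_bigl => z; rewrite !inE.
have -> : [set i | h z i] = s @^-1: [set i | z i] by apply/setP => i; rewrite !inE ffunE.
by rewrite card_preimset //; apply: perm_inj.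
Qed.

End Expectation.

Section Moments.
Variables (R : numFieldType) (n nt : nat).
Hypothesis nt_le_n : (nt <= n)%N.
Local Notation S := (crd_support n nt).
Local Notation E := (@crd_expect R n nt).

Lemma crd_expect_cst (c : R) : E (fun _ => c) = c.
Proof.
have N_neq0 : (#|S|%:R : R) != 0 by rewrite pnatr_eq0 -lt0n crd_support_card_gt0.
by rewrite /crd_expect sumr_const -[c *+ _]mulr_natr mulfK.
Qed.

Lemma crd_sum_treated z : z \in S -> \sum_i ((z i)%:R : R) = nt%:R.
Proof. by rewrite inE sum_treated => /eqP ->. Qed.

Lemma crd_expect_treated i : E (fun z => (z i)%:R) = nt%:R / n%:R.
Proof.
have n_neq0 : (n%:R : R) != 0 by rewrite pnatr_eq0 -lt0n (leq_ltn_trans _ (ltn_ord i)).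
have exch k : E (fun z => (z k)%:R) = E (fun z => (z i)%:R).
  rewrite (crd_expect_perm _ (tperm k i)).
  by apply: eq_crd_expect => z _; rewrite ffunE tpermL.
have : \sum_k E (fun z => (z k)%:R) = nt%:R.
  by rewrite -crd_expect_sum -[RHS]crd_expect_cst; apply: eq_crd_expect => z /crd_sum_treated.
rewrite (eq_bigr _ (fun k _ => exch k)) sumr_const card_ord -[_ *+ n]mulr_natr => <-.
by rewrite mulfK.
Qed.

Lemma crd_expect_treated_pair i j : i != j ->
  E (fun z => (z i)%:R * (z j)%:R) = nt%:R * (nt%:R - 1) / (n%:R * (n%:R - 1)).
Proof.
move=> ij; set p := E _.
have n_gt1 : (1 < n)%N.
  by have := ltn_ord i; have := ltn_ord j; move: ij; rewrite -val_eqE /=; lia.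
have nn1_neq0 : (n%:R * (n%:R - 1) : R) != 0.
  by rewrite mulf_neq0 // ?subr_eq0 ?pnatr_eq0 ?pnatr_eq1; lia.
have exch k l : k != l -> E (fun z => (z k)%:R * (z l)%:R) = p.
  move=> kl; have [s [sk sl]] := exists_perm2 ij kl.
  by rewrite (crd_expect_perm _ s); apply: eq_crd_expect => z _; rewrite !ffunE sk sl.
have diag k : E (fun z => (z k)%:R * (z k)%:R) = nt%:R / n%:R.
  rewrite -(crd_expect_treated k); apply: eq_crd_expect => z _.
  by case: (z k); rewrite ?mulr1 ?mulr0.
(* Count E[(\sum_k z_k)^2] = nt^2: nt from the diagonal, n(n-1) copies of p off it. *)
have row k : \sum_l E (fun z => (z k)%:R * (z l)%:R) = nt%:R / n%:R + (n%:R - 1) * p.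
  rewrite (bigD1 k) //= diag (eq_bigr (fun _ => p)) => [|l lk]; last by apply: exch; rewrite eq_sym.
  by rewrite sumr_const cardC1 card_ord -[p *+ _]mulr_natl -subn1 natrB // ltnW.
have total : \sum_k \sum_l E (fun z => (z k)%:R * (z l)%:R) = nt%:R * nt%:R.
  under eq_bigr do rewrite -crd_expect_sum.
  rewrite -crd_expect_sum -[RHS]crd_expect_cst; apply: eq_crd_expect => z zS.
  by rewrite -(crd_sum_treated zS) mulr_suml; apply: eq_bigr => k _; rewrite mulr_sumr.
have n_neq0 : (n%:R : R) != 0 by rewrite pnatr_eq0; lia.
have : nt%:R + p * (n%:R * (n%:R - 1)) = nt%:R * nt%:R.
  by rewrite -total (eq_bigr _ (fun k _ => row k)) sumr_const card_ord -mulr_natr; field.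
move=> count_pairs; rewrite -[p](mulfK nn1_neq0); congr (_ / _).
by apply: (addrI nt%:R); rewrite count_pairs; ring.
Qed.

Lemma crd_expect_treated_sum (a : 'I_n -> R) :
  E (fun z => \sum_i a i * (z i)%:R) = (\sum_i a i) * (nt%:R / n%:R).
Proof.
rewrite crd_expect_sum mulr_suml; apply: eq_bigr => i _.
by rewrite crd_expectZ crd_expect_treated.
Qed.

Lemma crd_expect_treated_pair_sum (w : 'I_n -> 'I_n -> R) : (forall i, w i i = 0) ->
  E (fun z => \sum_i \sum_j w i j * ((z i)%:R * (z j)%:R))
    = (\sum_i \sum_j w i j) * (nt%:R * (nt%:R - 1) / (n%:R * (n%:R - 1))).
Proof.
move=> w_diag; rewrite crd_expect_sum mulr_suml; apply: eq_bigr => i _.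
rewrite crd_expect_sum mulr_suml; apply: eq_bigr => j _.
rewrite crd_expectZ; have [<-|ij] := eqVneq i j; first by rewrite w_diag !mul0r.
by rewrite crd_expect_treated_pair.
Qed.

End Moments.

Lemma sum_adjacency n (g : 'I_n -> 'I_n -> bool) : simple_graph g ->
  (\sum_i \sum_j g i j)%N = (2 * num_edges g)%N.
Proof.
case=> g_irr g_sym; pose lt_edge (p : 'I_n * 'I_n) := (p.1 < p.2)%N && g p.1 p.2.
have -> : (\sum_i \sum_j g i j = \sum_p lt_edge p + \sum_p lt_edge (p.2, p.1))%N.
  rewrite pair_big -big_split /=; apply: eq_bigr => -[i j] _ /=.
  rewrite /lt_edge /= [g j i]g_sym.
  by case: (ltngtP i j) => [||/val_inj ->]; rewrite ?g_irr; case: (g i j).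
have swapK : involutive (fun p : 'I_n * 'I_n => (p.2, p.1)) by case.
have -> : (\sum_p lt_edge (p.2, p.1) = \sum_p lt_edge p)%N.
  by rewrite (reindex_inj (inv_inj swapK)); apply: eq_bigr => -[].
by rewrite addnn -mul2n sum_nat_bool /num_edges cardsE.
Qed.

Lemma crd_expect_beta_naive (R : fieldType) n nt (Y : 'I_n -> {ffun 'I_n -> bool} -> R) :
  crd_expect nt (beta_naive Y)
    = crd_expect nt (fun z => \sum_i Y i z * (z i)%:R) / nt%:R
      - (crd_expect nt (fun z => \sum_i Y i z)
         - crd_expect nt (fun z => \sum_i Y i z * (z i)%:R)) / (n%:R - nt%:R).
Proof.
rewrite -!crd_expectMr -crd_expectB -crd_expectMr -crd_expectB.
apply: eq_crd_expect => z; rewrite inE => /eqP card_z.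
rewrite /beta_naive /Yobs sum_treated card_z sumrB sumr_const card_ord sum_treated card_z.
by congr (_ - _ / _); rewrite -sumrB; apply: eq_bigr => i _; rewrite mulrBr mulr1.
Qed.

Section LinearInterference.
Variables (R : numFieldType) (n nt : nat) (g : 'I_n -> 'I_n -> bool).
Variables (alpha beta : 'I_n -> R) (gamma : R) (Y : 'I_n -> {ffun 'I_n -> bool} -> R).
Hypothesis g_irr : forall i, g i i = false.
Hypothesis Y_def : forall i z,
  Y i z = alpha i + beta i * (z i)%:R + gamma * \sum_j (g i j)%:R * (z j)%:R.
Hypothesis nt_le_n : (nt <= n)%N.
Local Notation E := (@crd_expect R n nt).
Local Notation deg_sum := (\sum_i \sum_j ((g i j)%:R : R)).

Lemma DTE_linear_interference : DTE Y = (\sum_i beta i) / n%:R.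
Proof.
rewrite /DTE; congr (_ / _); apply: eq_bigr => i _.
rewrite !Y_def /only_treated /none_treated !ffunE eqxx.
rewrite [X in _ + gamma * X - _]big1 => [|j _]; last first.
  by rewrite ffunE; have [->|] := eqVneq j i; rewrite ?g_irr ?mul0r ?mulr0.
rewrite big1 => [|j _]; last by rewrite ffunE mulr0.
by rewrite /=; ring.
Qed.

Lemma crd_expect_outcomes :
  E (fun z => \sum_i Y i z)
    = \sum_i alpha i + (\sum_i beta i + gamma * deg_sum) * (nt%:R / n%:R).
Proof.
pose b j := beta j + gamma * \sum_i ((g i j)%:R : R).
rewrite (eq_crd_expect (G := fun z => \sum_i alpha i + \sum_j b j * (z j)%:R)) => [|z _].
  rewrite crd_expectD crd_expect_cst // crd_expect_treated_sum //.
  by rewrite big_split -mulr_sumr exchange_big.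
rewrite (eq_bigr _ (fun i _ => Y_def i z)) !big_split /= -addrA; congr (_ + _).
rewrite [RHS](eq_bigr _ (fun j _ => mulrDl _ _ _)) big_split /=; congr (_ + _).
rewrite -mulr_sumr exchange_big mulr_sumr; apply: eq_bigr => j _.
by rewrite -mulrA mulr_suml.
Qed.

Lemma crd_expect_treated_outcomes :
  E (fun z => \sum_i Y i z * (z i)%:R)
    = (\sum_i (alpha i + beta i)) * (nt%:R / n%:R)
      + gamma * (deg_sum * (nt%:R * (nt%:R - 1) / (n%:R * (n%:R - 1)))).
Proof.
rewrite (eq_crd_expect (G := fun z => \sum_i (alpha i + beta i) * (z i)%:R
    + gamma * \sum_i \sum_j (g i j)%:R * ((z i)%:R * (z j)%:R))) => [|z _].
  rewrite crd_expectD crd_expectZ crd_expect_treated_sum // crd_expect_treated_pair_sum //.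
  by move=> i; rewrite g_irr.
rewrite mulr_sumr -big_split; apply: eq_bigr => i _ /=.
have -> : \sum_j (g i j)%:R * ((z i)%:R * (z j)%:R)
          = (z i)%:R * \sum_j ((g i j)%:R * (z j)%:R) :> R.
  by rewrite mulr_sumr; apply: eq_bigr => j _; rewrite mulrCA.
by rewrite Y_def; case: (z i) => /=; ring.
Qed.

End LinearInterference.

Theorem proposition12 (R : realFieldType) (n nt : nat)
    (g : 'I_n -> 'I_n -> bool)
    (alpha beta : 'I_n -> R) (gamma : R)
    (Y : 'I_n -> {ffun 'I_n -> bool} -> R) :
  (2 <= n)%N ->
  simple_graph g ->
  (forall i z, Y i z = alpha i + beta i * (z i)%:R
                       + gamma * \sum_j (g i j)%:R * (z j)%:R) ->
  (1 <= nt)%N -> (nt <= n - 1)%N ->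
  crd_expect nt (beta_naive Y) - DTE Y
    = - gamma * ((2 * num_edges g)%:R / (n * (n - 1))%:R).
Proof.
move=> n_ge2 g_simple Y_def nt_gt0 nt_lt_n.
have nt_le_n : (nt <= n)%N by lia.
have g_irr : forall i, g i i = false by case: g_simple.
have deg_sumE : \sum_i \sum_j ((g i j)%:R : R) = (2 * num_edges g)%:R.
  by rewrite -(sum_adjacency g_simple) natr_sum; apply: eq_bigr => i _; rewrite natr_sum.
rewrite crd_expect_beta_naive (crd_expect_outcomes Y_def nt_le_n).
rewrite (crd_expect_treated_outcomes g_irr Y_def nt_le_n) (DTE_linear_interference g_irr Y_def).
rewrite deg_sumE !natrM natrB ?(ltnW n_ge2) // big_split /=.
have n_neq0 : (n%:R : R) != 0 by rewrite pnatr_eq0; lia.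
have nt_neq0 : (nt%:R : R) != 0 by rewrite pnatr_eq0; lia.
have n_neq1 : (n%:R : R) - 1 != 0 by rewrite subr_eq0 pnatr_eq1; lia.
have n_neq_nt : (n%:R : R) - nt%:R != 0 by rewrite subr_eq0 eqr_nat; lia.
by field; rewrite n_neq1 n_neq0 n_neq_nt nt_neq0.
Qed.
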